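(* Let $k$ be a positive integer. If a graph $G$ is $k$-maximal, then $G=G_1*_k G_2$ where, for each $i=1,2$, either $G_i=K_1$ or $G_i$ is $k$-maximal.
   Context: Graphs are finite, loopless, possibly with multiple edges. $\kappa'(G)$ is the edge connectivity and $\overline{\kappa'}(G)=\max\{\kappa'(H): H \text{ a subgraph of } G\}$. A graph $G$ is $k$-maximal if $\overline{\kappa'}(G)\le k$ but for any new edge $e\notin E(G)$ joining two vertices of $G$ (possibly parallel to an existing edge), $\overline{\kappa'}(G+e)\ge k+1$. For vertex-disjoint connected graphs $G_1,G_2$ and a set $K$ of $k$ edges each having one end in $V(G_1)$ and the other in $V(G_2)$, the $k$-edge-join $G_1*_k G_2$ is the graph with vertex set $V(G_1)\cup V(G_2)$ and edge set $E(G_1)\cup E(G_2)\cup K$. *)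

From mathcomp Require Import all_boot.
Set Implicit Arguments. Unset Strict Implicit. Unset Printing Implicit Defensive.

(* A multigraph: vertex set [vset] (a subset of the ambient finite type T)
   and edge multiplicity [mult x y] = number of edges joining x and y. *)
Record mgraph (T : finType) := MGraph { vset : {set T}; mult : T -> T -> nat }.

Section Defs.
Variable T : finType.
Implicit Types G H : mgraph T.

Definition wf_graph G :=
  [/\ (forall x y, mult G x y = mult G y x),
      (forall x, mult G x x = 0) &
      (forall x y, 0 < mult G x y -> x \in vset G /\ y \in vset G)].

Definition cut G (X : {set T}) : nat :=
  \sum_(x in X) \sum_(y in vset G :\: X) mult G x y.

(* an upper bound for every cut (twice the number of edges) *)
Definition cut_bound G : nat :=
  \sum_(x in vset G) \sum_(y in vset G) mult G x y.

(* edge connectivity kappa'(G): minimum size of an edge cut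
   [X, V(G) \ X] over nonempty proper subsets X of V(G).
   For |V(G)| <= 1 there is no such X and the value is cut_bound G = 0. *)
Definition kappa' G : nat :=
  \big[minn/cut_bound G]_(X : {set T} |
     [&& X \subset vset G, X != set0 & X != vset G]) cut G X.

Definition subgraph H G :=
  [/\ wf_graph H, vset H \subset vset G & forall x y, mult H x y <= mult G x y].

(* \overline{kappa'}(G) <= k, i.e. max over subgraphs H of kappa'(H) is <= k *)
Definition kbar_le G (k : nat) := forall H, subgraph H G -> kappa' H <= k.

Definition kbar_ge G (j : nat) := exists H, subgraph H G /\ j <= kappa' H.

Definition add_edge G (u v : T) : mgraph T :=
  MGraph (vset G) (fun x y => mult G x y +
     nat_of_bool (((x == u) && (y == v)) || ((x == v) && (y == u)))).

Definition kmaximal (k : nat) G :=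
  [/\ wf_graph G, kbar_le G k &
      forall u v, u \in vset G -> v \in vset G -> u != v ->
        kbar_ge (add_edge G u v) k.+1].

Definition connected G :=
  vset G != set0 /\
  forall X : {set T}, X \subset vset G -> X != set0 -> X != vset G -> 0 < cut G X.

Definition edge_join (G1 G2 : mgraph T) (k : nat) G :=
  [/\ [/\ wf_graph G, wf_graph G1, wf_graph G2, connected G1 & connected G2],
      [disjoint vset G1 & vset G2],
      vset G = vset G1 :|: vset G2 &
      [/\ (forall x y, x \in vset G1 -> y \in vset G1 -> mult G x y = mult G1 x y),
          (forall x y, x \in vset G2 -> y \in vset G2 -> mult G x y = mult G2 x y) &
          \sum_(x in vset G1) \sum_(y in vset G2) mult G x y = k]].

End Defs.

From mathcomp Require Import all_boot zify.
Set Implicit Arguments. Unset Strict Implicit. Unset Printing Implicit Defensive.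

(* A minimum edge cut [X, V \ X] of G has exactly k edges.  It has at most k
   because kappa'(G) <= k.  It has at least k: add an edge uw across a smaller
   cut; the resulting subgraph H of edge connectivity k+1 must use the new edge,
   so it contains u and w, and the cut still separates H with at most k edges.
   The same argument applied to an edge added inside a side S (which has k edges
   leaving it) shows that H lies inside S, so G[S] is k-maximal.  Finally G[S]
   is connected: splitting S into two parts with no edge between them gives two
   cuts of G, each of size at least k, whose sizes add up to k. *)

Section EdgeCuts.
Variable T : finType.
Implicit Types (G H : mgraph T) (A B S X : {set T}).

Definition cross G A B := \sum_(x in A) \sum_(y in B) mult G x y.

Definition cut_side G X := [&& X \subset vset G, X != set0 & X != vset G].

Definition induced G S : mgraph T :=
  MGraph S (fun x y => if (x \in S) && (y \in S) then mult G x y else 0).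

Lemma cutE G X : cut G X = cross G X (vset G :\: X).
Proof. by []. Qed.

Lemma leq_sum_subset (F : T -> nat) A A' : A \subset A' ->
  \sum_(x in A) F x <= \sum_(x in A') F x.
Proof.
move=> /subsetP sAA'; rewrite big_mkcond [X in _ <= X]big_mkcond /=.
by apply: leq_sum => x _; case: ifP => // /sAA' ->.
Qed.

Lemma leq_cross G G' A A' B B' :
  A \subset A' -> B \subset B' -> (forall x y, mult G x y <= mult G' x y) ->
  cross G A B <= cross G' A' B'.
Proof.
move=> sAA' sBB' leGG'; apply: leq_trans (leq_sum_subset _ sAA').
apply: leq_sum => x _; apply: leq_trans (leq_sum_subset _ sBB').
exact: leq_sum.
Qed.

Lemma crossC G A B : wf_graph G -> cross G A B = cross G B A.
Proof.
case=> symG _ _; rewrite /cross exchange_big.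
by apply: eq_bigr => y _; apply: eq_bigr => x _.
Qed.

Lemma crossUl G A1 A2 B : [disjoint A1 & A2] ->
  cross G (A1 :|: A2) B = cross G A1 B + cross G A2 B.
Proof. by move=> dA; rewrite /cross -bigU //; apply: eq_bigl => x; rewrite !inE. Qed.

Lemma crossUr G A B1 B2 : [disjoint B1 & B2] ->
  cross G A (B1 :|: B2) = cross G A B1 + cross G A B2.
Proof.
move=> dB; rewrite /cross -big_split; apply: eq_bigr => x _.
by rewrite -bigU //; apply: eq_bigl => y; rewrite !inE.
Qed.

Lemma cut_setD G X : wf_graph G -> X \subset vset G -> cut G (vset G :\: X) = cut G X.
Proof.
move=> wG sXV; rewrite !cutE setDDr setDv set0U crossC //.
by move/setIidPr: sXV ->.
Qed.

Lemma bigmin_le (I : finType) (c : nat) (P : pred I) (F : I -> nat) i :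
  P i -> \big[minn/c]_(j | P j) F j <= F i.
Proof.
move=> Pi; have : i \in index_enum I by rewrite mem_index_enum.
elim: (index_enum I) => // j r IHr; rewrite inE big_cons.
case/predU1P => [<-|/IHr le_r]; first by rewrite Pi geq_minl.
by case: (P j) => //; apply: leq_trans (geq_minr _ _) le_r.
Qed.

Lemma kappa'_le_cut G X : cut_side G X -> kappa' G <= cut G X.
Proof. exact: bigmin_le. Qed.

Lemma kappa'_min_cut G : 2 <= #|vset G| -> exists2 X, cut_side G X & cut G X = kappa' G.
Proof.
move=> V2; have [v vV] : exists v, v \in vset G by apply/card_gt0P; apply: ltnW.
have side_v : cut_side G [set v].
  rewrite /cut_side sub1set vV -card_gt0 cards1 /=.
  by apply: contraTneq V2 => <-; rewrite cards1.
case: (arg_minnP (cut G) side_v) => X sideX minX; exists X => //.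
apply/eqP; rewrite eqn_leq kappa'_le_cut // andbT.
(* the default value [cut_bound G] of the minimum dominates every cut *)
apply: (big_ind (fun m => cut G X <= m)) => [||Y /minX //].
  by rewrite cutE; apply: leq_cross; rewrite ?subsetDl //; case/and3P: sideX.
by move=> m n; rewrite leq_min => -> ->.
Qed.

Lemma subgraph_le H G G' : subgraph H G -> vset G \subset vset G' ->
  (forall x y, mult G x y <= mult G' x y) -> subgraph H G'.
Proof.
case=> wH sHG leHG sGG' leGG'; split => //; first exact: subset_trans sGG'.
by move=> x y; apply: leq_trans (leGG' x y).
Qed.

Lemma kbar_le_sub G G' k : kbar_le G k -> vset G' \subset vset G ->
  (forall x y, mult G' x y <= mult G x y) -> kbar_le G' k.
Proof. by move=> kbG sG'G leG'G H /subgraph_le/(_ sG'G leG'G)/kbG. Qed.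

Lemma kappa'_le_cut_subgraph H G X : subgraph H G ->
  X :&: vset H != set0 -> ~~ (vset H \subset X) -> kappa' H <= cut G X.
Proof.
case=> _ sHG leHG XH0 HX; apply: (@leq_trans (cut H (X :&: vset H))).
  apply: kappa'_le_cut; rewrite /cut_side subsetIr XH0 /=.
  by apply: contra HX => /eqP <-; apply: subsetIl.
rewrite !cutE; apply: leq_cross => //; first exact: subsetIl.
by rewrite setDIr setDv setU0; apply: setSD.
Qed.

Lemma cut_add_edge G u v X : cut (add_edge G u v) X = cut G X +
  \sum_(x in X) \sum_(y in vset G :\: X)
     (((x == u) && (y == v)) || ((x == v) && (y == u))).
Proof. by rewrite /cut -big_split; apply: eq_bigr => x _; rewrite -big_split. Qed.

Lemma cut_add_edge_in G u v X : u \in X -> v \in X ->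
  cut (add_edge G u v) X = cut G X.
Proof.
move=> uX vX; rewrite cut_add_edge big1 ?addn0 // => x _.
apply: big1 => y; rewrite inE => /andP[yX _].
have [/negbTE-> /negbTE->] : y != v /\ y != u by split; apply: contraNneq yX => ->.
by rewrite !andbF.
Qed.

Lemma cut_add_edge_across G u v X : u \in X -> v \in vset G :\: X ->
  cut (add_edge G u v) X = (cut G X).+1.
Proof.
move=> uX vVX; rewrite cut_add_edge -addn1; congr (_ + _).
have vX : v \notin X by case/setDP: vVX.
rewrite (bigD1 u) //= (bigD1 v) //= !eqxx /= big1 => [|y /andP[_ /negbTE->]].
  rewrite big1 => [|x /andP[xX /negbTE->]]; last first.
    by apply: big1 => y _; case: (x =P v) xX => [->|_]; rewrite ?(negbTE vX).
  by rewrite !addn0.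
by case: (u =P v) uX => [->|_]; rewrite ?(negbTE vX) ?andbF.
Qed.

Lemma add_edge_witness_ends G H k u v : kbar_le G k ->
  subgraph H (add_edge G u v) -> k < kappa' H -> u \in vset H /\ v \in vset H.
Proof.
move=> kbG [wH sHG leH] ltk.
(* if H avoided the new edge it would be a subgraph of G *)
have [leHG|] := boolP [forall x, forall y, mult H x y <= mult G x y].
  have : subgraph H G by split=> // x y; apply: (forallP (forallP leHG x) y).
  by move/kbG; rewrite leqNgt ltk.
rewrite negb_forall => /existsP[x]; rewrite negb_forall => /existsP[y].
rewrite -ltnNge => ltGH.
have [xH yH] : x \in vset H /\ y \in vset H.
  by case: wH => _ _; apply; apply: leq_ltn_trans ltGH.
move: (leH x y) => /=; case: orP => [[]/andP[/eqP<- /eqP<-] //|_].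
by rewrite addn0 leqNgt ltGH.
Qed.

Lemma add_edge_witness_sub G H k u v X : kbar_le G k ->
  subgraph H (add_edge G u v) -> k < kappa' H ->
  u \in X -> cut (add_edge G u v) X <= k -> vset H \subset X.
Proof.
move=> kbG sH ltk uX cutX; have [uH _] := add_edge_witness_ends kbG sH ltk.
apply: contraTT ltk => HX; rewrite -leqNgt; apply: leq_trans cutX.
by apply: kappa'_le_cut_subgraph sH _ HX; apply/set0Pn; exists u; rewrite inE uX.
Qed.

Lemma kmaximal_cut_ge k G X : kmaximal k G -> cut_side G X -> k <= cut G X.
Proof.
case=> _ kbG addG /and3P[sXV X0 XV]; rewrite leqNgt; apply/negP => cutX.
have [u uX] := set0Pn _ X0.
have [w /setDP[wV wX]] : exists w, w \in vset G :\: X.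
  by apply/set0Pn; rewrite setD_eq0; apply: contra XV => sVX; rewrite eqEsubset sXV.
have uw : u != w by apply: contraNneq wX => <-.
have [H [sH ltk]] := addG u w (subsetP sXV u uX) wV uw.
have /subsetP sHX : vset H \subset X.
  apply: (add_edge_witness_sub kbG sH ltk uX).
  by rewrite cut_add_edge_across // inE wX.
have [_ /sHX] := add_edge_witness_ends kbG sH ltk.
by rewrite (negbTE wX).
Qed.

Lemma wf_induced G S : wf_graph G -> wf_graph (induced G S).
Proof.
case=> symG loopG _; split=> /= [x y|x|x y]; first by rewrite andbC symG.
  by rewrite loopG; case: ifP.
by case: ifP => [/andP[] //|]; rewrite ltnn.
Qed.

Lemma kmaximal_induced k G S : kmaximal k G -> S \subset vset G -> cut G S <= k ->
  kmaximal k (induced G S).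
Proof.
case=> wG kbG addG sSV cutS; split; first exact: wf_induced.
  by apply: (kbar_le_sub kbG) => // x y /=; case: ifP.
move=> u v /= uS vS uv.
have [H [sH ltk]] := addG u v (subsetP sSV u uS) (subsetP sSV v vS) uv.
have sHS : vset H \subset S.
  by apply: (add_edge_witness_sub kbG sH ltk uS); rewrite cut_add_edge_in.
exists H; split=> //; case: sH => wH _ leH; split=> // x y /=.
case: ifP => [_|]; first exact: leH.
case: (posnP (mult H x y)) => [-> //|]; case: wH => _ _ /[apply].
by case=> /(subsetP sHS)-> /(subsetP sHS)->.
Qed.

Lemma cut_split G S A : wf_graph G -> A \subset S -> S \subset vset G ->
  cut G A + cut G (S :\: A) = cut G S + (cross G A (S :\: A)).*2.
Proof.
move=> wG sAS sSV; set B := S :\: A; set D := vset G :\: S.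
have dAB : [disjoint A & B] by rewrite disjoints_subset setCD subsetUr.
have dAD : [disjoint A & D].
  by rewrite disjoints_subset setCD (subset_trans sAS) ?subsetUr.
have dBD : [disjoint B & D].
  by rewrite disjoints_subset setCD (subset_trans (subsetDl S A)) ?subsetUr.
have inA z : (z \in A) ==> (z \in S) by apply/implyP/(subsetP sAS).
have inS z : (z \in S) ==> (z \in vset G) by apply/implyP/(subsetP sSV).
have eVA : vset G :\: A = B :|: D.
  by apply/setP => z; move: (inA z) (inS z); rewrite !inE;
     case: (z \in A); case: (z \in S); case: (z \in vset G).
have eVB : vset G :\: B = A :|: D.
  by apply/setP => z; move: (inA z) (inS z); rewrite !inE;
     case: (z \in A); case: (z \in S); case: (z \in vset G).
have eS : S = A :|: B by rewrite -[LHS](setID S A) (setIidPr sAS).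
rewrite !cutE eVA eVB -/D {1}eS crossUr // crossUr // crossUl //.
rewrite (crossC B A wG) -addnn; lia.
Qed.

Lemma cut_induced G S A : A \subset S -> cut (induced G S) A = cross G A (S :\: A).
Proof.
move=> sAS; apply: eq_bigr => x xA; apply: eq_bigr => y /setDP[yS _] /=.
by rewrite (subsetP sAS x xA) yS.
Qed.

Lemma cut_side_split G S A : S \subset vset G -> A \subset S -> A != set0 -> A != S ->
  cut_side G A && cut_side G (S :\: A).
Proof.
move=> sSV sAS A0 AS; have [a aA] := set0Pn _ A0.
rewrite /cut_side (subset_trans sAS sSV) (subset_trans (subsetDl S A) sSV) A0 /=.
apply/and3P; split.
- by apply: contra AS => /eqP eAV; rewrite eqEsubset sAS eAV.
- by rewrite setD_eq0; apply: contra AS => sSA; rewrite eqEsubset sAS.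
- apply/eqP => eBV; move: (subsetP (subset_trans sAS sSV) a aA).
  by rewrite -eBV inE aA.
Qed.

Lemma induced_connected k G S : wf_graph G -> S \subset vset G -> S != set0 ->
  (forall Y, cut_side G Y -> k <= cut G Y) -> cut G S < k.*2 ->
  connected (induced G S).
Proof.
move=> wG sSV S0 mincut cutS; split=> // A /= sAS A0 AS.
rewrite cut_induced // lt0n; apply: contraTneq cutS => cross0.
have /andP[sideA sideB] := cut_side_split sSV sAS A0 AS.
rewrite -leqNgt -[cut G S]addn0 -[0]/(0.*2) -cross0 -cut_split // -addnn.
by rewrite leq_add ?mincut.
Qed.

Lemma edge_join_induced G X : wf_graph G -> X \subset vset G ->
  connected (induced G X) -> connected (induced G (vset G :\: X)) ->
  edge_join (induced G X) (induced G (vset G :\: X)) (cut G X) G.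
Proof.
move=> wG sXV cX cD; split=> //=.
- by split=> //; apply: wf_induced.
- by rewrite disjoints_subset setCD subsetUr.
- by rewrite -[LHS](setID (vset G) X) (setIidPr sXV).
- by split=> // x y /= -> ->.
Qed.

End EdgeCuts.

Theorem lemma3p4 (T : finType) (k : nat) (G : mgraph T) :
  0 < k -> 2 <= #|vset G| -> kmaximal k G ->
  exists G1 G2 : mgraph T,
    [/\ edge_join G1 G2 k G,
        #|vset G1| = 1 \/ kmaximal k G1 &
        #|vset G2| = 1 \/ kmaximal k G2].
Proof.
move=> k_gt0 V2 kmG; have [wG kbG _] := kmG.
have mincut := kmaximal_cut_ge kmG.
have [X sideX cutX_min] := kappa'_min_cut V2.
have cutX : cut G X = k.
  apply/eqP; rewrite eqn_leq mincut // cutX_min andbT.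
  by apply: kbG; split.
have [sXV X0 XV] := and3P sideX.
have sDV : vset G :\: X \subset vset G := subsetDl _ _.
have cutD : cut G (vset G :\: X) = k by rewrite cut_setD.
have D0 : vset G :\: X != set0.
  by rewrite setD_eq0; apply: contra XV => sVX; rewrite eqEsubset sXV.
have k_lt_2k : k < k.*2 by rewrite -addnn -addn1 leq_add2l.
exists (induced G X), (induced G (vset G :\: X)); split.
- rewrite -[in edge_join _ _ k]cutX.
  by apply: edge_join_induced => //; apply: (induced_connected (k := k));
     rewrite ?cutX ?cutD.
- by right; apply: kmaximal_induced; rewrite ?cutX.
- by right; apply: kmaximal_induced; rewrite ?cutD.
Qed.
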